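(* Let $C$ be an $(n,k)$-code with generator matrix $G$ and let $\ell\ge2$. (a) $C$ is $\operatorname{rMDS}^0(\ell)$ if and only if $C$ is $\operatorname{MDS}(\ell)$. (b) If $C$ is $\operatorname{rMDS}^d(\ell)$, then $C$ is $\operatorname{rMDS}^{d'}(\ell)$ for all $d'\ge d+1$ (with $d'\le n-k$). (c) If $C$ is $\operatorname{rMDS}^d(\ell)$, then $C$ is $\operatorname{rMDS}^d(\ell')$ for all $\ell'\in\{2,\dots,\ell-1\}$. (d) $C$ is $\operatorname{rMDS}^d(2)$ if and only if every $k+d$ columns of $G$ span $\mathbb F^k$.
   Context: For a matrix $V$ and $A\subseteq[n]$, $V|_A$ denotes the columns in $A$ and $V_A$ their span. A generic matrix has independent indeterminate entries. A code with $k\times n$ generator matrix $V$ is $\operatorname{MDS}(\ell)$ if for all $A_1,\dots,A_\ell\subseteq[n]$, $\dim(V_{A_1}\cap\dots\cap V_{A_\ell})=\dim(W_{A_1}\cap\dots\cap W_{A_\ell})$ for generic $k\times n$ $W$. $\mathcal G_{A_1,\dots,A_\ell}[V]$ is the $\ell k\times(k+\sum|A_i|)$ block matrix whose $i$-th block row has $I_k$ in the first block column and $V|_{A_i}$ in block column $i+1$. Sets are $V$-saturated if $\operatorname{rank}\mathcal G_{A_1,\dots,A_\ell}[V]=\ell k$, and have the $m$-dimensional saturation property if they are $W$-saturated for generic $m\times n$ $W$. $C$ is $\operatorname{rMDS}^d(\ell)$ ($0\le d\le n-k$) if every family with the $(k+d)$-dimensional saturation property is $G$-saturated. *)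

From HB Require Import structures.
From mathcomp Require Import all_boot all_order all_algebra.
From mathcomp Require Import fraction.
From mathcomp Require Import mpoly.
Set Implicit Arguments. Unset Strict Implicit. Unset Printing Implicit Defensive.
Import GRing.Theory.
Local Open Scope ring_scope.

Definition colsubset (K : fieldType) (m n : nat) (V : 'M[K]_(m, n))
  (A : {set 'I_n}) : 'M[K]_(m, #|A|) :=
  colsub (fun j : 'I_#|A| => enum_val j) V.

(* V_A : the column span of V|_A, represented (mxalgebra convention: row spaces)
   by the row space of (V|_A)^T, as a square matrix. *)
Definition colspan (K : fieldType) (m n : nat) (V : 'M[K]_(m, n))
  (A : {set 'I_n}) : 'M[K]_m := <<(colsubset V A)^T>>%MS.

Definition dim_cap (K : fieldType) (m n l : nat) (V : 'M[K]_(m, n))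
  (A : 'I_l -> {set 'I_n}) : nat :=
  \rank (\bigcap_(i < l) colspan V (A i))%MS.

(* The generic m x n matrix: entries are independent indeterminates X_(i,j),
   living in the field of rational functions F(X_(i,j)). *)
Definition genfield (F : fieldType) (m n : nat) : fieldType :=
  {fraction {mpoly F[m * n]}}.

Definition genmx (F : fieldType) (m n : nat) : 'M[genfield F m n]_(m, n) :=
  \matrix_(i < m, j < n) (@FracField.tofrac _ ('X_(mxvec_index i j) : {mpoly F[m * n]})).

(* The block matrix G_{A_1,...,A_l}[V] of size (l m) x (m + sum_i |A_i|):
   block row i is  [ I_m | 0 ... 0 | V|_{A_i} | 0 ... 0 ]  (V|_{A_i} in block column i+1). *)
Definition Gmx (K : fieldType) (m n l : nat) (V : 'M[K]_(m, n))
  (A : 'I_l -> {set 'I_n}) : 'M[K]_(\sum_(i < l) m, m + \sum_(j < l) #|A j|) :=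
  row_mx (\mxcol_(i < l) (1%:M : 'M[K]_m))
         (\mxblock_(i < l, j < l)
            (if i == j then colsubset V (A j) else 0 : 'M[K]_(m, #|A j|))).

Definition saturated (K : fieldType) (m n l : nat) (V : 'M[K]_(m, n))
  (A : 'I_l -> {set 'I_n}) : bool :=
  \rank (Gmx V A) == (l * m)%N.

Definition sat_prop (F : fieldType) (m n l : nat) (A : 'I_l -> {set 'I_n}) : bool :=
  saturated (genmx F m n) A.

Definition MDS (F : fieldType) (k n : nat) (l : nat) (G : 'M[F]_(k, n)) : Prop :=
  forall A : 'I_l -> {set 'I_n}, dim_cap G A = dim_cap (genmx F k n) A.

Definition rMDS (F : fieldType) (k n : nat) (d l : nat) (G : 'M[F]_(k, n)) : Prop :=
  forall A : 'I_l -> {set 'I_n}, sat_prop F (k + d) A -> saturated G A.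

(* The proof works with annihilators: for an m x n matrix V and a set S of
   columns, annmx V S is the space of row vectors killed by the columns of
   V|_S.  A family A is V-saturated iff the spaces annmx V (A i) form a direct
   sum, and by duality dim (V_{A_1} /\ ... /\ V_{A_l}) = m - rank of their sum.
   Specialising the generic matrix cannot raise ranks, so every V-saturated
   family has the saturation property in the dimension of V; applied to the
   first m rows of the generic (m+1) x n matrix this gives (b).  Padding a family
   with copies of [n] only adds zero annihilators, which gives (c), and for two
   sets saturation says annmx V (A_1 :|: A_2) = 0, which is (d).  For (a), any
   family can be enlarged to a saturated one without changing the sum of its
   annihilators; on saturated families G and the generic matrix are compared
   through the ranks of single column sets, which agree as soon as every k
   columns of G are independent. *)

From Pilot Require Import Defs.
From HB Require Import structures.
From mathcomp Require Import all_boot all_order all_algebra.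
From mathcomp Require Import fraction mpoly zify.
Set Implicit Arguments. Unset Strict Implicit. Unset Printing Implicit Defensive.
Import GRing.Theory.
Local Open Scope ring_scope.

Lemma subset_card_eq (T : finType) (A : {set T}) j :
  (j <= #|A|)%N -> exists2 B : {set T}, B \subset A & #|B| = j.
Proof.
case/card_geqP=> s [uniq_s <- sA]; exists [set x in s].
  by apply/subsetP=> x; rewrite inE; apply: sA.
by rewrite cardsE (card_uniqP uniq_s).
Qed.

Section Annihilator.
Variables (K : fieldType) (m n : nat) (V : 'M[K]_(m, n)).

Definition annmx (S : {set 'I_n}) : 'M[K]_m := kermx (colsubset V S).

Lemma sub_annmxP (w : 'rV[K]_m) S :
  (w <= annmx S)%MS = [forall j in S, (w *m V) 0 j == 0].
Proof.
apply/sub_kermxP/forall_inP=> [wV0 j jS|wV0].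
  have /matrixP/(_ 0 (enum_rank_in jS j)) := wV0; rewrite !mxE => wV0j.
  apply/eqP; rewrite -[RHS]wV0j; apply: eq_bigr=> i _.
  by rewrite /colsubset !mxE enum_rankK_in.
apply/matrixP=> i c; rewrite ord1 !mxE -[RHS](eqP (wV0 _ (enum_valP c))) mxE.
by apply: eq_bigr=> k _; rewrite /colsubset !mxE.
Qed.

Lemma mxrank_annmx S : \rank (annmx S) = (m - \rank (colsubset V S))%N.
Proof. exact: mxrank_ker. Qed.

Lemma annmx_eq0 S : (annmx S == 0) = (\rank (colsubset V S) == m).
Proof.
by rewrite -mxrank_eq0 mxrank_annmx subn_eq0 eqn_leq rank_leq_row.
Qed.

Lemma annmxS (S T : {set 'I_n}) : S \subset T -> (annmx T <= annmx S)%MS.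
Proof.
move=> /subsetP sST; apply/row_subP=> i; rewrite sub_annmxP.
apply/forall_inP=> j jS; move: (row_sub i (annmx T)); rewrite sub_annmxP.
by move/forall_inP; apply; apply: sST.
Qed.

Lemma annmxU (S T : {set 'I_n}) : (annmx (S :|: T) == annmx S :&: annmx T)%MS.
Proof.
apply/andP; split; first by rewrite sub_capmx !annmxS ?subsetUl ?subsetUr.
apply/row_subP=> i; rewrite sub_annmxP; apply/forall_inP=> j.
have := row_sub i (annmx S :&: annmx T)%MS; rewrite sub_capmx !sub_annmxP.
case/andP=> /forall_inP wS /forall_inP wT.
by rewrite inE => /orP[/wS | /wT].
Qed.

Lemma mxrank_colsubsetS (S T : {set 'I_n}) :
  S \subset T -> (\rank (colsubset V S) <= \rank (colsubset V T))%N.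
Proof.
move=> /annmxS/mxrankS; rewrite !mxrank_annmx.
have := rank_leq_row (colsubset V S); have := rank_leq_row (colsubset V T); lia.
Qed.

Lemma mxrank_colsubsetU (S T : {set 'I_n}) :
  (\rank (colsubset V (S :|: T)) <= \rank (colsubset V S) + \rank (colsubset V T))%N.
Proof.
have := mxrank_sum_cap (annmx S) (annmx T).
rewrite -(eqmx_rank (annmxU S T)) !mxrank_annmx.
have := rank_leq_row (annmx S + annmx T)%MS.
have := rank_leq_row (colsubset V S); have := rank_leq_row (colsubset V T).
have := rank_leq_row (colsubset V (S :|: T)); lia.
Qed.

Lemma annmxT_eq0 : row_free V -> annmx setT = 0.
Proof.
move=> freeV; apply/eqP; rewrite -submx0; apply/row_subP=> i.
rewrite submx0 -(mulmx_free_eq0 _ freeV); apply/eqP/rowP=> j.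
have := row_sub i (annmx setT); rewrite sub_annmxP.
by move/forall_inP/(_ j (in_setT j))/eqP ->; rewrite mxE.
Qed.

Lemma annmx_setU1 S x (u : 'rV[K]_m) :
  (u <= annmx S)%MS -> (u *m V) 0 x != 0 -> (annmx S <= annmx (x |: S) + u)%MS.
Proof.
move=> uS ux; apply/row_subP=> i; set w := row i _.
pose c := (w *m V) 0 x / (u *m V) 0 x.
have wS : (w <= annmx S)%MS := row_sub i _.
rewrite -(subrK (c *: u) w) addmx_sub_adds ?scalemx_sub //.
rewrite sub_annmxP mulmxBl -scalemxAl; apply/forall_inP=> j.
move: wS uS; rewrite !sub_annmxP /c; set a := w *m V; set b := u *m V in ux *.
clearbody a b => /forall_inP wS /forall_inP uS; rewrite !mxE in_setU1.
case/orP=> [/eqP-> | jS]; first by rewrite divfK // subrr.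
by rewrite (eqP (wS j jS)) (eqP (uS j jS)) mulr0 subrr.
Qed.

End Annihilator.

Section Saturation.
Variables (K : fieldType) (m n l : nat) (V : 'M[K]_(m, n)).
Variable A : 'I_l -> {set 'I_n}.

Lemma mul_mxrow_Gmx (w : 'I_l -> 'rV[K]_m) :
  @mxrow _ l (fun=> m) 1 w *m Gmx V A =
  row_mx (\sum_i w i) (\mxrow_j (w j *m colsubset V (A j))).
Proof.
rewrite mul_mx_row mul_mxrow_mxcol mul_mxrow_mxblock.
congr row_mx; first by apply: eq_bigr=> i _; rewrite mulmx1.
apply: eq_mxrow=> j; rewrite (bigD1 j) //= eqxx big1 ?addr0 // => i /negPf->.
by rewrite mulmx0.
Qed.

Lemma saturatedE : saturated V A = row_free (Gmx V A).
Proof.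
by rewrite /saturated /row_free; congr (_ == _); rewrite big_const_ord iter_addn_0 mulnC.
Qed.

Lemma saturatedP :
  saturated V A <->
  (forall w : 'I_l -> 'rV[K]_m, (forall i, w i <= annmx V (A i))%MS ->
     \sum_i w i = 0 -> forall i, w i = 0).
Proof.
rewrite saturatedE; split=> [freeGmx w wA sum_w0 i | indepA].
  suff /eqP : @mxrow _ l (fun=> m) 1 w == 0.
    by move/(congr1 (fun u => submxrow u i)); rewrite mxrowK submxrow0.
  rewrite -(mulmx_free_eq0 _ freeGmx) mul_mxrow_Gmx sum_w0 row_mx_eq0 eqxx /=.
  rewrite -(mxrow0 (q_ := fun j => #|A j|)); apply/eqP/eq_mxrow=> j.
  exact/sub_kermxP.
apply: inj_row_free=> u; rewrite -[u]submxrowK mul_mxrow_Gmx.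
move/eqP; rewrite row_mx_eq0 => /andP[/eqP sum_u0 /eqP wA0].
rewrite (eq_mxrow (B_ := fun=> 0)) ?mxrow0 // => i; apply: indepA sum_u0 i => j.
apply/sub_kermxP; move/eqP: wA0; rewrite -(mxrow0 (q_ := fun j => #|A j|)).
by move/eqP/eq_mxrowP.
Qed.

Lemma saturated_mxdirect : saturated V A <-> mxdirect (\sum_i annmx V (A i)).
Proof.
rewrite saturatedP; split=> [indepA | /mxdirect_sumsP directA w wA sum_w0 i].
  apply/mxdirect_sumsP=> i _; apply/eqP; rewrite -submx0; apply/row_subP=> k.
  rewrite submx0; set r := row k _.
  have /sub_sumsmxP[u ru] : (r <= \sum_(j | j != i) annmx V (A j))%MS.
    by rewrite (submx_trans (row_sub k _)) ?capmxSr.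
  pose w j := if j == i then - r else u j *m annmx V (A j).
  suff /(_ i) : forall j, w j = 0 by rewrite /w eqxx => /eqP; rewrite oppr_eq0.
  apply: indepA=> [j|].
    rewrite /w; case: eqP=> [-> | _]; last exact: submxMl.
    by rewrite eqmx_opp (submx_trans (row_sub k _)) ?capmxSl.
  rewrite (bigD1 i) //= /w eqxx ru addrC; apply/eqP; rewrite subr_eq0.
  by apply/eqP/eq_bigr=> j /negPf->.
have : (w i <= annmx V (A i) :&: \sum_(j | true && (j != i)) annmx V (A j))%MS.
  rewrite sub_capmx wA /=.
  have -> : w i = - \sum_(j | j != i) w j.
    by apply/eqP; rewrite -addr_eq0; move: sum_w0; rewrite (bigD1 i) //= => ->.
  by rewrite eqmx_opp; apply: summx_sub_sums=> j _.
by rewrite directA // submx0 => /eqP.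
Qed.

Lemma saturated_rank :
  saturated V A <->
  \rank (\sum_i annmx V (A i))%MS = (\sum_i \rank (annmx V (A i)))%N.
Proof. by rewrite saturated_mxdirect mxdirectE; split=> /eqP. Qed.

End Saturation.

Section OrthogonalComplement.
Variables (K : fieldType) (m : nat).

Definition orthmx p (X : 'M[K]_(p, m)) : 'M[K]_m := kermx X^T.

Lemma orthmxS p q (X : 'M[K]_(p, m)) (Y : 'M[K]_(q, m)) :
  (X <= Y)%MS -> (orthmx Y <= orthmx X)%MS.
Proof.
move=> /mulmxKpV <-; apply/sub_kermxP.
by rewrite trmx_mul mulmxA mulmx_ker mul0mx.
Qed.

Lemma mxrank_orthmx p (X : 'M[K]_(p, m)) : \rank (orthmx X) = (m - \rank X)%N.
Proof. by rewrite mxrank_ker mxrank_tr. Qed.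

Lemma eqmx_orthmx p q (X : 'M[K]_(p, m)) (Y : 'M[K]_(q, m)) :
  (X == Y)%MS -> (orthmx X == orthmx Y)%MS.
Proof. by case/andP=> sXY sYX; rewrite !orthmxS. Qed.

Lemma orthmx_adds (X Y : 'M[K]_m) : (orthmx X :&: orthmx Y == orthmx (X + Y)%MS)%MS.
Proof.
apply/andP; split; last by rewrite sub_capmx !orthmxS ?addsmxSl ?addsmxSr.
have sXYcol : ((X + Y)%MS <= col_mx X Y)%MS by rewrite addsmxE.
apply: submx_trans (orthmxS sXYcol); apply/sub_kermxP.
rewrite tr_col_mx mul_mx_row.
by rewrite (sub_kermxP (capmxSl _ _)) (sub_kermxP (capmxSr _ _)) row_mx0.
Qed.

Lemma orthmx_cap (X Y : 'M[K]_m) : (orthmx X + orthmx Y == orthmx (X :&: Y)%MS)%MS.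
Proof.
have sub : (orthmx X + orthmx Y <= orthmx (X :&: Y)%MS)%MS.
  by rewrite addsmx_sub !orthmxS ?capmxSl ?capmxSr.
rewrite -(mxrank_leqif_eq sub) mxrank_orthmx.
have := mxrank_sum_cap (orthmx X) (orthmx Y).
have := mxrank_sum_cap X Y.
rewrite (eqmx_rank (orthmx_adds X Y)) !mxrank_orthmx.
have := rank_leq_row (X + Y)%MS; have := rank_leq_row (orthmx X + orthmx Y)%MS.
have := rank_leq_row X; have := rank_leq_row Y.
move=> *; apply/eqP; lia.
Qed.

Lemma orthmx_bigcap l (X : 'I_l -> 'M[K]_m) :
  (\sum_i orthmx (X i) == orthmx (\bigcap_i X i)%MS)%MS.
Proof.
elim: l X => [|l IHl] X.
  by rewrite !big_ord0 sub0mx submx0 -mxrank_eq0 mxrank_orthmx mxrank1 subnn.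
rewrite !big_ord_recr /=; apply/eqmxP.
apply: eqmx_trans (eqmxP (orthmx_cap _ _)).
exact: adds_eqmx (eqmxP (IHl _)) (eqmx_refl _).
Qed.

End OrthogonalComplement.

Section Intersection.
Variables (K : fieldType) (m n l : nat) (V : 'M[K]_(m, n)).

Lemma annmx_orthmx S : (annmx V S == orthmx (colspan V S))%MS.
Proof.
rewrite /annmx -[colsubset V S]trmxK.
by apply/eqmx_orthmx/eqmxP/eqmx_sym/genmxE.
Qed.

Lemma dim_cap_annmx (A : 'I_l -> {set 'I_n}) :
  (dim_cap V A + \rank (\sum_i annmx V (A i)))%N = m.
Proof.
rewrite (eqmx_sums (fun i _ => eqmxP (annmx_orthmx (A i)))).
rewrite (eqmx_rank (orthmx_bigcap _)) mxrank_orthmx /dim_cap.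
by rewrite subnKC // rank_leq_row.
Qed.

Lemma dim_cap_const S :
  (0 < l)%N -> dim_cap V (fun _ : 'I_l => S) = \rank (colsubset V S).
Proof.
move=> l_gt0; rewrite -mxrank_tr -(genmxE (colsubset V S)^T) /dim_cap.
apply/eqmx_rank/andP; split; first exact: (bigcapmx_inf (Ordinal l_gt0)).
by apply/sub_bigcapmxP.
Qed.

End Intersection.

Lemma dim_cap_eqE (K1 K2 : fieldType) m n l (V1 : 'M[K1]_(m, n)) (V2 : 'M[K2]_(m, n))
    (A : 'I_l -> {set 'I_n}) :
  dim_cap V1 A = dim_cap V2 A <->
  \rank (\sum_i annmx V1 (A i)) = \rank (\sum_i annmx V2 (A i)).
Proof. by have := dim_cap_annmx V1 A; have := dim_cap_annmx V2 A; split; lia. Qed.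

Lemma mxrank_mxsub (K : fieldType) p q p' q' (f : 'I_p' -> 'I_p) (g : 'I_q' -> 'I_q)
    (M : 'M[K]_(p, q)) :
  (\rank (mxsub f g M) <= \rank M)%N.
Proof.
have -> : mxsub f g M = rowsub f (rowsub g M^T)^T by apply/matrixP=> i j; rewrite !mxE.
apply: leq_trans (mxrankS (rowsub_sub _ _)) _.
by rewrite mxrank_tr -[leqRHS]mxrank_tr mxrankS ?rowsub_sub.
Qed.

Lemma row_free_rowsub1 (K : fieldType) p q (f : 'I_p -> 'I_q) :
  injective f -> row_free (rowsub f (1%:M : 'M[K]_q)).
Proof.
move=> injf; apply/row_freeP; exists (colsub f 1%:M).
by rewrite -rowsubE; apply/matrixP=> i j; rewrite !mxE (inj_eq injf).
Qed.

Section Specialization.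
Variables (R : idomainType) (L : fieldType) (f : {rmorphism R -> L}).

(* A nonzero maximal minor of [map_mx f P] comes from a nonzero minor of [P]. *)
Lemma mxrank_map_tofrac p q (P : 'M[R]_(p, q)) :
  (\rank (map_mx f P) <= \rank (map_mx (@FracField.tofrac R) P))%N.
Proof.
set M := map_mx f P; have freeM := maxrowsub_free M.
have fullM : row_full (rowsub (maxrankfun M) M)^T by rewrite /row_full mxrank_tr.
have := fullrowsub_unit fullM.
set Q := mxsub (maxrankfun M) (fullrankfun fullM) P.
have -> : rowsub (fullrankfun fullM) (rowsub (maxrankfun M) M)^T = (map_mx f Q)^T.
  by apply/matrixP=> i j; rewrite !mxE.
rewrite unitmxE det_tr det_map_mx unitfE => detQ.
have unitQ : map_mx (@FracField.tofrac R) Q \in unitmx.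
  by rewrite unitmxE det_map_mx unitfE tofrac_eq0; apply: contraNneq detQ => ->; rewrite rmorph0.
by have := mxrank_unit unitQ; rewrite map_mxsub => <-; apply: mxrank_mxsub.
Qed.

End Specialization.

Section GenericMatrix.
Variables (F : fieldType) (m n : nat).

(* [Gmx] needs a field; this copy over rings, convertible to it over a field,
   is what ring morphisms out of the polynomial ring act on. *)
Definition Gmx_ring (R : pzRingType) l (P : 'M[R]_(m, n)) (A : 'I_l -> {set 'I_n}) :=
  row_mx (\mxcol_(i < l) (1%:M : 'M[R]_m))
    (\mxblock_(i < l, j < l)
       (if i == j then colsub (fun c : 'I_#|A j| => enum_val c) P else 0)).

Lemma map_Gmx_ring (R : pzRingType) (K : fieldType) (f : {rmorphism R -> K}) l
    (P : 'M[R]_(m, n)) (A : 'I_l -> {set 'I_n}) :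
  Gmx (map_mx f P) A = map_mx f (Gmx_ring P A).
Proof.
rewrite /Gmx /Gmx_ring map_row_mx; congr row_mx; apply/matrixP=> i j; rewrite !mxE.
  by rewrite rmorphMn rmorph1.
by case: (_ == _); rewrite !mxE ?rmorph0.
Qed.

Definition polygenmx : 'M[{mpoly F[m * n]}]_(m, n) :=
  \matrix_(i, j) 'X_(mxvec_index i j).

Lemma genmx_tofrac : Defs.genmx F m n = map_mx (@FracField.tofrac _) polygenmx.
Proof. by apply/matrixP=> i j; rewrite !mxE. Qed.

Lemma map_mmap_polygenmx (L : comNzRingType) (c : {rmorphism F -> L}) (M : 'M[L]_(m, n)) :
  map_mx (mmap c (fun t => mxvec M 0 t)) polygenmx = M.
Proof. by apply/matrixP=> i j; rewrite !mxE mmapX mmap1U mxvecE. Qed.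

Lemma saturated_sat_prop (L : fieldType) (c : {rmorphism F -> L}) (M : 'M[L]_(m, n))
    l (A : 'I_l -> {set 'I_n}) :
  saturated M A -> sat_prop F m A.
Proof.
rewrite /sat_prop !saturatedE -(map_mmap_polygenmx c M) genmx_tofrac !map_Gmx_ring.
rewrite /row_free => /eqP rankM; rewrite eqn_leq rank_leq_row -[X in (X <= _)%N]rankM.
exact: mxrank_map_tofrac.
Qed.

Lemma mxrank_colsubset_genmx S :
  \rank (colsubset (Defs.genmx F m n) S) = minn m #|S|.
Proof.
apply/eqP; rewrite eqn_leq leq_min rank_leq_row rank_leq_col /=.
pose G0 : 'M[F]_(m, n) := \matrix_(i, j) ((j \in S) && (index j (enum S) == i))%:R.
have -> : minn m #|S| = \rank (colsubset G0 S).
  suff -> : colsubset G0 S = pid_mx (minn m #|S|).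
    by rewrite rank_pid_mx ?geq_minl ?geq_minr.
  apply/matrixP=> i c; rewrite !mxE enum_valP /=.
  have -> : index (enum_val c) (enum S) = c.
    by rewrite {1}(enum_val_nth (enum_val c)) index_uniq ?enum_uniq // -cardE.
  by rewrite leq_min ltn_ord eq_sym; case: eqP=> //= ->; rewrite ltn_ord.
rewrite -(map_mmap_polygenmx idfun G0) genmx_tofrac /colsubset -!map_mxsub.
exact: mxrank_map_tofrac.
Qed.

End GenericMatrix.

Section Enlarge.
Variables (K : fieldType) (m n l : nat) (V : 'M[K]_(m, n)).
Hypothesis annmxT0 : annmx V setT = 0.

Lemma enlarge_step (A : 'I_l -> {set 'I_n}) :
  ~~ mxdirect (\sum_i annmx V (A i)) ->
  exists i x, x \notin A i /\
    (\sum_j annmx V (if j == i then x |: A i else A j) == \sum_j annmx V (A j))%MS.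
Proof.
move=> notdirect.
have [i] : exists i, (annmx V (A i) :&: \sum_(j | j != i) annmx V (A j) != 0)%MS.
  apply/existsP; apply: contraR notdirect; rewrite negb_exists => /forallP cap0.
  by apply/mxdirect_sumsP=> i _; apply/eqP/negbNE/cap0.
rewrite -nz_row_eq0; set X := (_ :&: _)%MS; set u := nz_row X => u_neq0.
have uAi : (u <= annmx V (A i))%MS := submx_trans (nz_row_sub X) (capmxSl _ _).
have uAj : (u <= \sum_(j | j != i) annmx V (A j))%MS.
  exact: submx_trans (nz_row_sub X) (capmxSr _ _).
have [x _ ux] : exists2 x, x \in setT & (u *m V) 0 x != 0.
  by apply/exists_inP; rewrite -negb_forall_in -sub_annmxP annmxT0 submx0.
exists i, x; split.
  by apply: contra ux => xAi; move: uAi; rewrite sub_annmxP => /forall_inP->.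
set B := fun j => if j == i then x |: A i else A j.
apply/andP; split.
  by apply/sumsmx_subP=> j _; apply: (sumsmx_sup j) => //; rewrite /B; case: eqP=> [->|_];
    rewrite ?annmxS ?subsetUr.
apply/sumsmx_subP=> j _; have [->{j} | neq_ji] := eqVneq j i; last first.
  by apply: (sumsmx_sup j) => //; rewrite /B (negPf neq_ji).
apply: submx_trans (annmx_setU1 uAi ux) _; rewrite addsmx_sub.
rewrite (sumsmx_sup i) /B ?eqxx //=; apply: submx_trans uAj _.
apply/sumsmx_subP=> j neq_ji; apply: (sumsmx_sup j) => //.
by rewrite (negPf neq_ji).
Qed.

Lemma enlarge_saturated (A : 'I_l -> {set 'I_n}) :
  exists B : 'I_l -> {set 'I_n}, [/\ forall i, A i \subset B i, saturated V B &
    (\sum_i annmx V (B i) == \sum_i annmx V (A i))%MS].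
Proof.
have [N] := ubnP (\sum_i #|~: A i|)%N; elim: N A => // N IHN A.
have [dirA _ | /enlarge_step[i [x [xAi sumB]]] ltAN] :=
  boolP (mxdirect (\sum_i annmx V (A i))).
  exists A; split=> //; last by rewrite submx_refl.
  exact: (iffRL (saturated_mxdirect V A)).
set B := fun j => if j == i then x |: A i else A j in sumB.
have AB j : A j \subset B j by rewrite /B; case: eqP=> [->|_]; rewrite ?subsetUr.
have [|C [BC satC sumC]] := IHN B.
  apply: leq_trans (ltnSE ltAN); rewrite (bigD1 i) //= [ltnRHS](bigD1 i) //= /B eqxx.
  rewrite -addSn leq_add ?proper_card ?properC ?properUr ?sub1set //.
  by apply/eq_leq/eq_bigr=> j /negPf->.
exists C; split=> [j||]; first exact: subset_trans (AB j) (BC j).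
  exact: satC.
by apply/eqmxP; apply: eqmx_trans (eqmxP sumC) (eqmxP sumB).
Qed.

End Enlarge.

Section SaturationTransfer.
Variables (K1 K2 : fieldType) (m n l : nat) (V1 : 'M[K1]_(m, n)) (V2 : 'M[K2]_(m, n)).
Hypothesis annmxT0 : annmx V1 setT = 0.
Hypothesis rank_colsubsetE : forall S, \rank (colsubset V1 S) = \rank (colsubset V2 S).
Hypothesis saturated12 :
  forall B : 'I_l -> {set 'I_n}, saturated V1 B -> saturated V2 B.

Lemma mxrank_sum_annmx_le (A : 'I_l -> {set 'I_n}) :
  (\rank (\sum_i annmx V1 (A i)) <= \rank (\sum_i annmx V2 (A i)))%N.
Proof.
have [B [AB sat1B /eqmx_rank <-]] := enlarge_saturated annmxT0 A.
have /saturated_rank -> := sat1B; have /saturated_rank sum2B := saturated12 sat1B.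
under eq_bigr do rewrite mxrank_annmx rank_colsubsetE -mxrank_annmx.
by rewrite -sum2B; apply/mxrankS/sumsmxS=> i _; apply: annmxS.
Qed.

End SaturationTransfer.

Lemma saturated_mulmx_free (K : fieldType) p m n l (E : 'M[K]_(p, m))
    (V : 'M[K]_(m, n)) (A : 'I_l -> {set 'I_n}) :
  row_free E -> saturated V A -> saturated (E *m V) A.
Proof.
move=> freeE /saturatedP indepA; apply/saturatedP=> w wA sum_w0 i.
apply/eqP; rewrite -(mulmx_free_eq0 _ freeE); apply/eqP.
apply: (indepA (fun j => w j *m E)) => [j|]; last by rewrite -mulmx_suml sum_w0 mul0mx.
by move: (wA j); rewrite !sub_annmxP mulmxA.
Qed.

Section GenericSaturation.
Variables (F : fieldType) (n l : nat) (A : 'I_l -> {set 'I_n}).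

Lemma sat_prop_succ m : sat_prop F m.+1 A -> sat_prop F m A.
Proof.
have widen_inj : injective (widen_ord (leqnSn m)) by move=> i j [] /val_inj.
rewrite /sat_prop => /(saturated_mulmx_free (row_free_rowsub1 _ widen_inj)).
rewrite -rowsubE.
exact: (saturated_sat_prop (@FracField.tofrac _ \o @mpolyC _ F)).
Qed.

Lemma sat_propW m1 m2 : (m1 <= m2)%N -> sat_prop F m2 A -> sat_prop F m1 A.
Proof.
move/subnKC <-; elim: (m2 - m1)%N => [|d IHd]; first by rewrite addn0.
by rewrite addnS => /sat_prop_succ.
Qed.

End GenericSaturation.

Section PadFamily.
Variables (n l l' : nat) (le_l'l : (l' <= l)%N) (A' : 'I_l' -> {set 'I_n}).

Definition padT : 'I_l -> {set 'I_n} :=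
  fun i => if insub (val i) is Some j then A' j else setT.

Lemma big_padT (R : Type) (idx : R) (op : Monoid.com_law idx) (f : {set 'I_n} -> R) :
  f setT = idx -> \big[op/idx]_(i < l) f (padT i) = \big[op/idx]_(j < l') f (A' j).
Proof.
move=> fT; rewrite (bigID (fun i : 'I_l => (i < l')%N)) /= [X in op _ X]big1.
  rewrite Monoid.mulm1 (big_ord_narrow_cond (P := xpredT) le_l'l) /=.
  by apply: eq_bigr=> j _; rewrite /padT /= valK.
by move=> i; rewrite /padT; case: insubP=> //= j ltj _ /negP.
Qed.

Lemma saturated_padT (K : fieldType) m (V : 'M[K]_(m, n)) :
  annmx V setT = 0 -> saturated V padT <-> saturated V A'.
Proof.
move=> annmxT0; have rankT0 : \rank (annmx V setT) = 0%N by rewrite annmxT0 mxrank0.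
rewrite !saturated_rank (big_padT _ annmxT0).
by rewrite (@big_padT _ _ _ (fun S => \rank (annmx V S)) rankT0).
Qed.

End PadFamily.

Lemma saturated2 (K : fieldType) m n (V : 'M[K]_(m, n)) (A : 'I_2 -> {set 'I_n}) :
  saturated V A <-> \rank (colsubset V (A ord0 :|: A ord_max)) = m.
Proof.
rewrite saturated_rank !big_ord_recl !big_ord0 addsmx0_id addn0.
have -> : lift ord0 ord0 = ord_max :> 'I_2 by apply: val_inj.
have := mxrank_sum_cap (annmx V (A ord0)) (annmx V (A ord_max)).
rewrite -(eqmx_rank (annmxU V _ _)) mxrank_annmx.
have := rank_leq_row (colsubset V (A ord0 :|: A ord_max)); lia.
Qed.

Lemma mxrank_colsubset_minn (K : fieldType) k n (V : 'M[K]_(k, n)) :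
  (k <= n)%N -> (forall S : {set 'I_n}, #|S| = k -> \rank (colsubset V S) = k) ->
  forall S : {set 'I_n}, \rank (colsubset V S) = minn k #|S|.
Proof.
move=> le_kn rankV S; apply/eqP; rewrite eqn_leq leq_min rank_leq_row rank_leq_col /=.
have [le_kS | lt_Sk] := leqP k #|S|.
  have [T sTS cardT] := subset_card_eq le_kS.
  by rewrite -{1}(rankV T cardT) mxrank_colsubsetS.
have [T sTSC cardT] : exists2 T : {set 'I_n}, T \subset ~: S & #|T| = (k - #|S|)%N.
  by apply: (@subset_card_eq _ (~: S)); have := cardsC S; rewrite card_ord; lia.
have cardST : #|S :|: T| = k.
  rewrite cardsU cardT; move: sTSC; rewrite -disjoints_subset disjoint_sym -setI_eq0.
  by move/eqP->; rewrite cards0; lia.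
have rankST : (k <= \rank (colsubset V S) + \rank (colsubset V T))%N.
  by rewrite -{1}(rankV _ cardST) mxrank_colsubsetU.
have rankT : (\rank (colsubset V T) <= k - #|S|)%N by rewrite -cardT rank_leq_col.
rewrite -(leq_add2r (k - #|S|)) subnKC ?(ltnW lt_Sk) //.
by apply: leq_trans rankST _; rewrite leq_add2l.
Qed.

Lemma annmx_genmxT (F : fieldType) m n : (m <= n)%N -> annmx (Defs.genmx F m n) setT = 0.
Proof.
move=> le_mn; apply/eqP.
by rewrite annmx_eq0 mxrank_colsubset_genmx cardsT card_ord (minn_idPl le_mn).
Qed.

Section RelaxedMDS.
Variables (F : fieldType) (n k : nat) (G : 'M[F]_(k, n)).

Lemma rMDSW d d' l : (d <= d')%N -> rMDS d l G -> rMDS d' l G.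
Proof.
by move=> le_dd' rMDS_d A satA; apply/rMDS_d/(sat_propW _ satA); rewrite leq_add2l.
Qed.

Lemma rMDS_narrow d l l' :
  (l' <= l)%N -> (k + d <= n)%N -> row_free G -> rMDS d l G -> rMDS d l' G.
Proof.
move=> le_l'l le_kdn freeG rMDS_l A satA.
apply/(saturated_padT le_l'l A (annmxT_eq0 freeG))/rMDS_l.
by apply/(saturated_padT le_l'l A (annmx_genmxT F le_kdn)).
Qed.

Lemma rMDS2P d :
  rMDS d 2 G <-> forall S : {set 'I_n}, #|S| = (k + d)%N -> \rank (colsubset G S) = k.
Proof.
split=> [rMDS2 S cardS | rankG A].
  have /rMDS2/saturated2 : sat_prop F (k + d) (fun _ : 'I_2 => S).
    by apply/saturated2; rewrite setUid mxrank_colsubset_genmx cardS minnn.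
  by rewrite setUid.
move/saturated2; rewrite mxrank_colsubset_genmx => /minn_idPl le_kdU.
have [S sSU cardS] := subset_card_eq le_kdU.
apply/saturated2/eqP; rewrite eqn_leq rank_leq_row -{1}(rankG S cardS).
exact: mxrank_colsubsetS.
Qed.

Lemma rMDS0_rank_colsubset l :
  (2 <= l)%N -> row_free G -> rMDS 0 l G ->
  forall S : {set 'I_n}, \rank (colsubset G S) = minn k #|S|.
Proof.
move=> le2l freeG rMDS0; have le_kn : (k <= n)%N by rewrite -(eqP freeG) rank_leq_col.
apply: mxrank_colsubset_minn => // S cardS.
have /rMDS2P := rMDS_narrow le2l (leq_trans (eq_leq (addn0 k)) le_kn) freeG rMDS0.
by apply; rewrite addn0.
Qed.

Lemma rMDS0_MDS l : row_free G -> (2 <= l)%N -> rMDS 0 l G -> MDS l G.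
Proof.
move=> freeG le2l rMDS0 A; set W := Defs.genmx F k n.
have le_kn : (k <= n)%N by rewrite -(eqP freeG) rank_leq_col.
have rankE S : \rank (colsubset G S) = \rank (colsubset W S).
  by rewrite mxrank_colsubset_genmx (rMDS0_rank_colsubset le2l freeG rMDS0).
have satGW (B : 'I_l -> {set 'I_n}) : saturated G B -> saturated W B.
  exact: (@saturated_sat_prop _ _ _ _ idfun).
have satWG (B : 'I_l -> {set 'I_n}) : saturated W B -> saturated G B.
  by move=> satWB; apply: rMDS0; rewrite addn0.
apply/dim_cap_eqE/eqP; rewrite eqn_leq.
rewrite (mxrank_sum_annmx_le (annmxT_eq0 freeG) rankE satGW).
by rewrite (mxrank_sum_annmx_le (annmx_genmxT F le_kn) (fun S => esym (rankE S)) satWG).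
Qed.

Lemma MDS_rMDS0 l : (0 < l)%N -> MDS l G -> rMDS 0 l G.
Proof.
move=> l_gt0 MDS_G A; rewrite addn0 /sat_prop => /saturated_rank satWA.
have rankE S : \rank (colsubset G S) = \rank (colsubset (Defs.genmx F k n) S).
  by rewrite -!(dim_cap_const _ _ l_gt0); apply: MDS_G.
apply/saturated_rank; have /dim_cap_eqE -> := MDS_G A; rewrite satWA.
by apply: eq_bigr=> i _; rewrite !mxrank_annmx rankE.
Qed.

End RelaxedMDS.

Theorem proposition3p5 (F : fieldType) (n k : nat) (G : 'M[F]_(k, n))
  (hG : \rank G = k) (l : nat) (hl : (2 <= l)%N) :
  (rMDS 0 l G <-> MDS l G) /\
  (forall d d' : nat, (d <= n - k)%N -> (d.+1 <= d')%N -> (d' <= n - k)%N ->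
     rMDS d l G -> rMDS d' l G) /\
  (forall (d l' : nat), (d <= n - k)%N -> (2 <= l')%N -> (l' < l)%N ->
     rMDS d l G -> rMDS d l' G) /\
  (forall d : nat, (d <= n - k)%N ->
     (rMDS d 2 G <->
      forall S : {set 'I_n}, #|S| = (k + d)%N -> \rank (colsubset G S) = k)).
Proof.
have le_kn : (k <= n)%N by rewrite -hG rank_leq_col.
have freeG : row_free G by rewrite /row_free hG.
split; first by split; [exact: rMDS0_MDS | apply: MDS_rMDS0; apply: ltnW].
split; first by move=> d d' _ /ltnW le_dd' _; apply: rMDSW.
split; last by move=> d _; apply: rMDS2P.
move=> d l' le_d _ lt_l'l; apply: rMDS_narrow (ltnW lt_l'l) _ freeG; lia.
Qed.
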